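(* $\Delta_{\mathsf F}$ is a pseudometric on the set $\{b\in B(\mathcal V),\ \mathcal V\in \mathsf F\}$.
   Context: Let $\mathsf{BS}$ be the category whose objects are finite dimensional real vector spaces $\mathcal V$ endowed with a fixed proper (closed, convex, pointed, generating) cone $\mathcal V^+\subset\mathcal V$ and a base section $B(\mathcal V)$, i.e. a convex subset $B(\mathcal V)\subset\mathcal V^+$ which is a base of the cone $\mathcal V^+\cap\mathrm{span}(B(\mathcal V))$ and satisfies $B(\mathcal V)\cap\mathrm{int}(\mathcal V^+)\neq\emptyset$. Morphisms $\Lambda:\mathcal V\to\mathcal W$ in $\mathsf{BS}$ are linear maps with $\Lambda(\mathcal V^+)\subseteq\mathcal W^+$ and $\Lambda(B(\mathcal V))\subseteq B(\mathcal W)$. The dual object $\mathcal V^*$ carries the dual cone $\mathcal V^{*+}=\{\varphi\in\mathcal V^*:\ \langle\varphi,c\rangle\ge0\ \forall c\in\mathcal V^+\}$ and the dual base section $B(\mathcal V^* )=\{\varphi\in\mathcal V^{*+}:\ \langle\varphi,b\rangle=1\ \forall b\in B(\mathcal V)\}$. With $[-B(\mathcal V^* ),B(\mathcal V^* )]=\{x\in\mathcal V^*:\ \exists b\in B(\mathcal V^* ),\ -b\le x\le b\}$, the norm on $\mathcal V$ is $\|x\|_{\mathcal V}=\max_{\psi\in[-B(\mathcal V^* ),B(\mathcal V^* )]}\langle\psi,x\rangle$. Let $\mathsf F$ be a subcategory of $\mathsf{BS}$ such that for any objects $\mathcal V,\mathcal W\in\mathsf F$ the set $\mathsf F(\mathcal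 V,\mathcal W)$ of morphisms $\mathcal V\to\mathcal W$ in $\mathsf F$ is convex. For objects $\mathcal V_1,\mathcal V_2\in\mathsf F$ and $b_1\in B(\mathcal V_1)$, $b_2\in B(\mathcal V_2)$, define $\delta_{\mathsf F}(b_1\|b_2)=\inf_{\Lambda\in\mathsf F(\mathcal V_1,\mathcal V_2)}\|\Lambda(b_1)-b_2\|_{\mathcal V_2}$ and $\Delta_{\mathsf F}(b_1,b_2)=\max\{\delta_{\mathsf F}(b_1\|b_2),\delta_{\mathsf F}(b_2\|b_1)\}$. *)

From HB Require Import structures.
From mathcomp Require Import all_boot all_order all_algebra.
From mathcomp Require Import all_classical all_reals all_analysis.
Set Implicit Arguments.
Unset Strict Implicit.
Unset Printing Implicit Defensive.
Import Order.TTheory GRing.Theory Num.Theory.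
Import numFieldNormedType.Exports.
Local Open Scope classical_set_scope.
Local Open Scope ring_scope.

Section BaseSections.
Variable R : realType.

(* A finite dimensional real vector space is modelled as R^n = 'rV[R]_n;
   its dual is again 'rV[R]_n with the pairing below. *)
Definition pairing n (phi x : 'rV[R]_n) : R := \sum_(i < n) phi 0 i * x 0 i.

Definition proper_cone n (C : set 'rV[R]_n) : Prop :=
  [/\ [/\ C 0,
        (forall x (a : R), C x -> 0 <= a -> C (a *: x)),
        (forall x y, C x -> C y -> C (x + y))
      & (forall x y (t : R), C x -> C y -> 0 <= t <= 1 -> C (t *: x + (1 - t) *: y))],
      closed C,
      (forall x, C x -> C (- x) -> x = 0)
    & (forall z, exists x y, [/\ C x, C y & z = x - y])].

Definition span_of n (B : set 'rV[R]_n) : set 'rV[R]_n :=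
  [set x | exists (k : nat) (c : 'I_k -> R) (v : 'I_k -> 'rV[R]_n),
           (forall i, B (v i)) /\ x = \sum_(i < k) c i *: v i].

Definition cone_base n (K B : set 'rV[R]_n) : Prop :=
  [/\ B `<=` K, ~ B 0,
      (forall x y (t : R), B x -> B y -> 0 <= t <= 1 -> B (t *: x + (1 - t) *: y))
    & (forall x, K x -> x != 0 ->
         exists t b, [/\ 0 < t, B b, x = t *: b &
           forall t' b', 0 < t' -> B b' -> x = t' *: b' -> t' = t /\ b' = b])].

Definition base_section n (C B : set 'rV[R]_n) : Prop :=
  [/\ B `<=` C, cone_base (C `&` span_of B) B & (B `&` interior C) !=set0].

Record BSObj := mkBSObj {
  bsdim : nat;
  pos : set 'rV[R]_bsdim;
  base : set 'rV[R]_bsdim;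
  pos_proper : proper_cone pos;
  base_sec : base_section pos base }.
Arguments pos : clear implicits.
Arguments base : clear implicits.

(* morphisms act on row vectors by right multiplication: x |-> x *m A *)
Definition BSmor (V W : BSObj) (A : 'M[R]_(bsdim V, bsdim W)) : Prop :=
  (forall x, pos V x -> pos W (x *m A)) /\ (forall b, base V b -> base W (b *m A)).

Definition dual_cone (V : BSObj) : set 'rV[R]_(bsdim V) :=
  [set phi | forall c, pos V c -> 0 <= pairing phi c].
Arguments dual_cone : clear implicits.

Definition dual_base (V : BSObj) : set 'rV[R]_(bsdim V) :=
  [set phi | dual_cone V phi /\ forall b, base V b -> pairing phi b = 1].
Arguments dual_base : clear implicits.

(* the order interval [-B(V dual), B(V dual)] for the dual cone order *)
Definition dual_interval (V : BSObj) : set 'rV[R]_(bsdim V) :=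
  [set x | exists b, [/\ dual_base V b, dual_cone V (x + b) & dual_cone V (b - x)]].
Arguments dual_interval : clear implicits.

(* the base norm (the max of the paper, taken as a supremum in \bar R) *)
Definition bnorm (V : BSObj) (x : 'rV[R]_(bsdim V)) : \bar R :=
  ereal_sup [set (pairing psi x)%:E | psi in dual_interval V].
Arguments bnorm : clear implicits.

Definition is_subcat (Fob : BSObj -> Prop)
    (Fmor : forall V W : BSObj, 'M[R]_(bsdim V, bsdim W) -> Prop) : Prop :=
  [/\ (forall V W A, Fmor V W A -> [/\ Fob V, Fob W & BSmor A]),
      (forall V, Fob V -> Fmor V V 1%:M)
    & (forall U V W (A : 'M[R]_(bsdim U, bsdim V)) (B : 'M[R]_(bsdim V, bsdim W)),
         Fmor U V A -> Fmor V W B -> Fmor U W (A *m B))].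

Definition convex_homs (Fob : BSObj -> Prop)
    (Fmor : forall V W : BSObj, 'M[R]_(bsdim V, bsdim W) -> Prop) : Prop :=
  forall V W, Fob V -> Fob W -> forall (A B : 'M[R]_(bsdim V, bsdim W)) (t : R),
    Fmor V W A -> Fmor V W B -> 0 <= t <= 1 -> Fmor V W (t *: A + (1 - t) *: B).

Definition deltaF (Fmor : forall V W : BSObj, 'M[R]_(bsdim V, bsdim W) -> Prop)
    (V1 V2 : BSObj) (b1 : 'rV[R]_(bsdim V1)) (b2 : 'rV[R]_(bsdim V2)) : \bar R :=
  ereal_inf [set bnorm V2 (b1 *m A - b2) | A in Fmor V1 V2].

Definition DeltaF (Fmor : forall V W : BSObj, 'M[R]_(bsdim V, bsdim W) -> Prop)
    (V1 V2 : BSObj) (b1 : 'rV[R]_(bsdim V1)) (b2 : 'rV[R]_(bsdim V2)) : \bar R :=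
  Order.max (deltaF Fmor b1 b2) (deltaF Fmor b2 b1).

End BaseSections.
Arguments pos {R} b _.
Arguments base {R} b _.
Arguments deltaF {R} Fmor {V1 V2} b1 b2.
Arguments DeltaF {R} Fmor {V1 V2} b1 b2.

From HB Require Import structures.
From mathcomp Require Import all_boot all_order all_algebra.
From mathcomp Require Import all_classical all_reals all_analysis.
From mathcomp Require Import ring lra.
Import Order.TTheory GRing.Theory Num.Theory.
Import numFieldNormedType.Exports.
Local Open Scope classical_set_scope.
Local Open Scope ring_scope.
Set Implicit Arguments.
Unset Strict Implicit.
Unset Printing Implicit Defensive.

(* Identities give [DeltaF b b = 0], symmetry is built into the max, and the
   triangle inequality comes from composing morphisms, which contract the base
   norm.  The substance is nonnegativity: the base norm is nonnegative as soon as
   the dual base section is nonempty.  Since [B] is a base, the "mass" [t1 - t2]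
   of [t1 b1 - t2 b2] is well defined on the span of [B]; it is linear and
   nonnegative on the cone there, and an element of [B] interior to the cone is
   an order unit, so the M. Riesz extension theorem extends it to a positive
   functional on the whole space, which is [1] on [B]. *)

Section LinearOn.
Variables (R : nzRingType) (V : lmodType R).

Definition is_subspace (S : set V) := S 0 /\ forall a x y, S x -> S y -> S (a *: x + y).

Definition linear_on (S : set V) (f : V -> R) :=
  forall a x y, S x -> S y -> f (a *: x + y) = a * f x + f y.

Variables (S : set V) (f : V -> R).
Hypotheses (S_sub : is_subspace S) (f_lin : linear_on S f).

Lemma subspaceZ a x : S x -> S (a *: x).
Proof. by move=> Sx; have := S_sub.2 a x 0 Sx S_sub.1; rewrite addr0. Qed.

Lemma subspaceD x y : S x -> S y -> S (x + y).
Proof. by move=> Sx Sy; have := S_sub.2 1 x y Sx Sy; rewrite scale1r. Qed.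

Lemma linear_on0 : f 0 = 0.
Proof.
have := f_lin 1 S_sub.1 S_sub.1; rewrite scale1r addr0 mul1r.
by move/(congr1 (fun z => z - f 0)); rewrite subrr addrK.
Qed.

Lemma linear_onZ a x : S x -> f (a *: x) = a * f x.
Proof. by move=> Sx; have := f_lin a Sx S_sub.1; rewrite !addr0 linear_on0 addr0. Qed.

Lemma linear_onD x y : S x -> S y -> f (x + y) = f x + f y.
Proof. by move=> Sx Sy; have := f_lin 1 Sx Sy; rewrite scale1r mul1r. Qed.

Lemma linear_on_sum I (r : seq I) (c : I -> R) (v : I -> V) :
  (forall i, S (v i)) ->
  S (\sum_(i <- r) c i *: v i) /\ f (\sum_(i <- r) c i *: v i) = \sum_(i <- r) c i * f (v i).
Proof.
move=> Sv; elim: r => [|i r [Sr fr]]; first by rewrite !big_nil linear_on0; split; case: S_sub.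
by rewrite !big_cons; split; [exact: S_sub.2 | rewrite f_lin // fr].
Qed.

End LinearOn.

Section RieszExtension.
Variables (R : realType) (V : lmodType R) (C : set V).
Hypotheses (C_add : forall x y, C x -> C y -> C (x + y))
  (C_scale : forall x (a : R), C x -> 0 <= a -> C (a *: x)).
Variable e : V.
Hypothesis e_order_unit : forall v, exists2 s : R, 0 < s & C (s *: e + v).

Definition nonneg_on (S : set V) (f : V -> R) := forall x, S x -> C x -> 0 <= f x.

Definition positive_linear_on (S : set V) (f : V -> R) :=
  [/\ is_subspace S, linear_on S f, nonneg_on S f & S e].

Definition extends (S : set V) (f : V -> R) (S' : set V) (f' : V -> R) :=
  forall x, S x -> S' x /\ f' x = f x.

Definition adjoin (S : set V) (v : V) := [set x | exists s t, S s /\ x = s + t *: v].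

Lemma subspace_adjoin S v : is_subspace S -> is_subspace (adjoin S v).
Proof.
move=> sS; split; first by exists 0, 0; rewrite scale0r addr0; case: sS.
move=> a _ _ [s1 [t1 [S1 ->]]] [s2 [t2 [S2 ->]]]; exists (a *: s1 + s2), (a * t1 + t2).
by split; [exact: sS.2 | rewrite scalerDr scalerDl scalerA addrACA].
Qed.

Lemma adjoin_linear_on S f v (c : R) : is_subspace S -> linear_on S f -> ~ S v ->
  exists f', linear_on (adjoin S v) f' /\
    forall s t, S s -> f' (s + t *: v) = f s + t * c.
Proof.
move=> sS lf Sv.
have decomp_uniq s1 t1 s2 t2 :
    S s1 -> S s2 -> s1 + t1 *: v = s2 + t2 *: v -> s1 = s2 /\ t1 = t2.
  move=> S1 S2 E; have Et : t1 = t2.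
    apply: contra_notP Sv => /eqP; rewrite -subr_eq0 => t12.
    have E2 : (t1 - t2) *: v = s2 - s1.
      by rewrite scalerBl; apply/eqP; rewrite subr_eq addrAC -E addrC addKr.
    have -> : v = (t1 - t2)^-1 *: (s2 - s1) by rewrite -E2 scalerA mulVf ?scale1r.
    by apply: subspaceZ => //; apply: subspaceD => //; rewrite -scaleN1r; exact: subspaceZ.
  by move: E; rewrite Et => /addIr.
pose f' x :=
  let st := xget (0, 0) [set st | S st.1 /\ x = st.1 + st.2 *: v] in f st.1 + st.2 * c.
have f'E s t : S s -> f' (s + t *: v) = f s + t * c.
  move=> Ss; rewrite /f'; case: xgetP => [[s1 t1] _ /= [S1 E]|/(_ (s, t)) []//].
  by have [-> ->] := decomp_uniq _ _ _ _ Ss S1 E.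
exists f'; split => // a _ _ [s1 [t1 [S1 ->]]] [s2 [t2 [S2 ->]]].
rewrite scalerDr scalerA addrACA -scalerDl !f'E ?lf //; first ring.
exact: sS.2.
Qed.

(* [c] is the supremum of the [- f x] with [x + v] in [C]; it lies below every
   [f y] with [y - v] in [C] since then [x + y] is in [C]. *)
Lemma extension_constant S f v : positive_linear_on S f ->
  exists c, forall x t, S x -> C (x + t *: v) -> 0 <= f x + t * c.
Proof.
move=> [sS lf pf Se].
pose A := [set - f x | x in [set x | S x /\ C (x + v)]].
have sep x y : S x -> C (x + v) -> S y -> C (y - v) -> - f x <= f y.
  move=> Sx Cx Sy Cy; rewrite -subr_ge0 opprK -(linear_onD lf) //.
  apply: pf; first exact: subspaceD.
  by have := C_add Cy Cx; rewrite addrACA addNr addr0.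
have [s s0 Cs] := e_order_unit v.
have [s' s'0 Cs'] := e_order_unit (- v).
have supA : has_sup A.
  split; first by exists (- f (s *: e)), (s *: e) => //; split => //; exact: subspaceZ.
  by exists (f (s' *: e)) => _ [x [Sx Cx] <-]; apply: sep => //; exact: subspaceZ.
have upper x : S x -> C (x + v) -> 0 <= f x + sup A.
  move=> Sx Cx; suff : - f x <= sup A by move=> ?; lra.
  by apply: sup_upper_bound => //; exists x.
have lower y : S y -> C (y - v) -> 0 <= f y - sup A.
  move=> Sy Cy; have : sup A <= f y.
    by apply: ge_sup; [case: supA | move=> _ [x [Sx Cx] <-]; exact: sep].
  by rewrite subr_ge0.
exists (sup A) => x t Sx Cxt.
have rescale u : 0 < u -> C (u^-1 *: (x + t *: v)).
  by move=> u0; apply: C_scale Cxt _; rewrite invr_ge0 ltW.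
have unscale u y : 0 < u -> 0 <= u^-1 * f x + y -> 0 <= f x + u * y.
  move=> u0 h; have -> : f x + u * y = u * (u^-1 * f x + y) by field; rewrite gt_eqF.
  exact: mulr_ge0 (ltW u0) h.
case: (ltgtP t 0) => [t_lt0|t_gt0|t0].
- rewrite -mulrNN; apply: unscale; first by rewrite oppr_gt0.
  rewrite -(linear_onZ sS lf _ Sx); apply: lower; first exact: subspaceZ.
  have := rescale (- t) ltac:(by rewrite oppr_gt0).
  by rewrite scalerDr scalerA invrN mulNr mulVf ?lt_eqF // scaleN1r.
- apply: unscale => //; rewrite -(linear_onZ sS lf _ Sx); apply: upper; first exact: subspaceZ.
  by have := rescale _ t_gt0; rewrite scalerDr scalerA mulVf ?gt_eqF // scale1r.
- by move: Cxt; rewrite t0 scale0r addr0 mul0r addr0; exact: pf.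
Qed.

Lemma riesz_extend_step S f v : positive_linear_on S f ->
  exists S' f', [/\ positive_linear_on S' f', extends S f S' f' & S' v].
Proof.
move=> hf; have [sS lf pf Se] := hf.
have [Sv|nSv] := pselect (S v); first by exists S, f; split.
have [c hc] := extension_constant v hf.
have [f' [lf' f'E]] := adjoin_linear_on c sS lf nSv.
have ext : extends S f (adjoin S v) f'.
  move=> x Sx; split; first by exists x, 0; rewrite scale0r addr0.
  by have := f'E x 0 Sx; rewrite scale0r addr0 mul0r addr0.
exists (adjoin S v), f'; split => //.
- split => //; [exact: subspace_adjoin | | exact: (ext e Se).1].
  by move=> _ [s [t [Ss ->]]] Cx; rewrite f'E //; exact: hc.
- by exists 0, 1; rewrite add0r scale1r; split => //; case: sS.
Qed.

Lemma riesz_extend_seq S f (l : seq V) : positive_linear_on S f ->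
  exists S' f', [/\ positive_linear_on S' f', extends S f S' f' & forall v, v \in l -> S' v].
Proof.
move=> hf; elim: l => [|v l [S1 [f1 [hf1 ext1 Sl]]]]; first by exists S, f; split.
have [S2 [f2 [hf2 ext2 S2v]]] := riesz_extend_step v hf1.
exists S2, f2; split => // [x Sx|w].
  by have [S1x <-] := ext1 x Sx; exact: ext2.
by rewrite inE => /predU1P [-> // | /Sl /ext2 []].
Qed.

End RieszExtension.

Lemma riesz_extension (R : realType) n (C : set 'rV[R]_n) (e : 'rV[R]_n) S f :
  (forall x y, C x -> C y -> C (x + y)) ->
  (forall x (a : R), C x -> 0 <= a -> C (a *: x)) ->
  (forall v, exists2 s : R, 0 < s & C (s *: e + v)) ->
  positive_linear_on C e S f ->
  exists phi, (forall x, C x -> 0 <= pairing phi x) /\ (forall x, S x -> pairing phi x = f x).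
Proof.
move=> C_add C_scale e_unit hf.
have [S' [f' [[sS' lf' pf' _] ext Sbasis]]] :=
  riesz_extend_seq C_add C_scale e_unit [seq 'e_j | j <- enum 'I_n] hf.
have S'e j : S' 'e_j by apply: Sbasis; apply/mapP; exists j; rewrite ?mem_enum.
have pairing_f' x : S' x /\ pairing (\row_j f' 'e_j) x = f' x.
  have [] := linear_on_sum sS' lf' (index_enum 'I_n) (x 0) S'e.
  rewrite -row_sum_delta => S'x ->; split => //.
  by apply: eq_bigr => j _; rewrite mxE mulrC.
exists (\row_j f' 'e_j); split => [x Cx|x Sx]; have [S'x ->] := pairing_f' x.
  exact: pf'.
by have [_ ->] := ext x Sx.
Qed.

Lemma nbhs_ray (R : realFieldType) (V : normedModType R) (C : set V) (e v : V) :
  nbhs e C -> exists2 t : R, 0 < t & C (e + t *: v).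
Proof.
move=> Ce.
have ray_cvg : (fun t : R => e + t *: v) @ (0 : R) --> e.
  rewrite -[X in _ --> X]addr0; apply: cvgD; first exact: cvg_cst.
  by rewrite -[X in _ --> X](scale0r v); apply: cvgZl; exact: cvg_id.
have /nbhs_ballP [r /= r0 ball_r] := ray_cvg _ Ce.
exists (r / 2); first by rewrite divr_gt0.
apply: ball_r; rewrite /ball /= sub0r normrN gtr0_norm ?divr_gt0 //.
by rewrite ltr_pdivrMr // ltr_pMr // ltr1n.
Qed.

Lemma interior_order_unit (R : realFieldType) (V : normedModType R) (C : set V) (e : V) :
  (forall x (a : R), C x -> 0 <= a -> C (a *: x)) -> nbhs e C ->
  forall v, exists2 s : R, 0 < s & C (s *: e + v).
Proof.
move=> C_scale Ce v; have [t t0 Ct] := nbhs_ray v Ce.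
exists t^-1; first by rewrite invr_gt0.
have -> : t^-1 *: e + v = t^-1 *: (e + t *: v).
  by rewrite scalerDr scalerA mulVf ?scale1r // gt_eqF.
by apply: C_scale => //; rewrite invr_ge0 ltW.
Qed.

Section BaseSection.
Variables (R : realType) (V : BSObj R).
Local Notation C := (pos V).
Local Notation B := (base V).

Lemma base_sub_pos : B `<=` C.
Proof. by case: (base_sec V). Qed.

Lemma base_neq0 b : B b -> b != 0.
Proof. by have [_ [_ nB0 _ _] _] := base_sec V; apply: contraPneq => ->. Qed.

Lemma span_of_base_diff t1 t2 b1 b2 : B b1 -> B b2 -> span_of B (t1 *: b1 - t2 *: b2).
Proof.
move=> B1 B2.
exists 2%N, (fun i : 'I_2 => [:: t1; - t2]`_i), (fun i : 'I_2 => [:: b1; b2]`_i).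
by split; [case=> [[|[|]]] | rewrite !big_ord_recl big_ord0 addr0 scaleNr].
Qed.

Lemma base_scale_eq p q b b' :
  0 <= p -> 0 <= q -> B b -> B b' -> p *: b = q *: b' -> p = q.
Proof.
move=> p0 q0 Bb Bb'.
have [->|pnz] := eqVneq p 0.
  by rewrite scale0r => /esym/eqP; rewrite scaler_eq0 (negbTE (base_neq0 Bb')) orbF => /eqP.
have [->|qnz] := eqVneq q 0.
  by rewrite scale0r => /eqP; rewrite scaler_eq0 (negbTE (base_neq0 Bb)) orbF (negbTE pnz).
move=> E.
have [[_ C_scale _ _] _ _ _] := pos_proper V.
have [_ [_ _ _ uniq_rep] _] := base_sec V.
have pb : (C `&` span_of B) (p *: b).
  split; first exact: C_scale (base_sub_pos Bb) p0.
  by have := span_of_base_diff p 0 Bb Bb; rewrite scale0r subr0.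
have pb_neq0 : p *: b != 0 by rewrite scaler_eq0 negb_or pnz base_neq0.
have [t [b0 [_ _ _ uniq_pb]]] := uniq_rep _ pb pb_neq0.
rewrite (uniq_pb p b _ Bb erefl).1 ?lt_def ?pnz //.
by rewrite (uniq_pb q b' _ Bb' E).1 // lt_def qnz.
Qed.

Lemma base_conic_comb p q b1 b2 : 0 <= p -> 0 <= q -> B b1 -> B b2 ->
  exists2 b, B b & p *: b1 + q *: b2 = (p + q) *: b.
Proof.
move=> p0 q0 B1 B2.
have [pq0|pqnz] := eqVneq (p + q) 0.
  have [-> ->] : p = 0 /\ q = 0 by split; lra.
  by exists b1 => //; rewrite addr0 !scale0r addr0.
have [_ [_ _ B_convex _] _] := base_sec V.
exists ((p / (p + q)) *: b1 + (1 - p / (p + q)) *: b2).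
  apply: B_convex => //; rewrite divr_ge0 ?addr_ge0 //=.
  by rewrite ler_pdivrMr ?mul1r ?lerDl // lt_def pqnz addr_ge0.
by rewrite scalerDr !scalerA; congr (_ *: _ + _ *: _); field.
Qed.

Lemma base_coef_sum_eq p1 p2 q1 q2 b1 b2 c1 c2 :
  0 <= p1 -> 0 <= p2 -> 0 <= q1 -> 0 <= q2 -> B b1 -> B b2 -> B c1 -> B c2 ->
  p1 *: b1 + p2 *: b2 = q1 *: c1 + q2 *: c2 -> p1 + p2 = q1 + q2.
Proof.
move=> p10 p20 q10 q20 B1 B2 C1 C2.
have [d Bd ->] := base_conic_comb p10 p20 B1 B2.
have [d' Bd' ->] := base_conic_comb q10 q20 C1 C2.
by apply: base_scale_eq => //; exact: addr_ge0.
Qed.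

Definition base_diff (x : 'rV[R]_(bsdim V)) t1 t2 b1 b2 :=
  [/\ 0 <= t1, 0 <= t2, B b1, B b2 & x = t1 *: b1 - t2 *: b2].

Definition base_diffs x := exists t1 t2 b1 b2, base_diff x t1 t2 b1 b2.

Definition base_mass x :=
  let t := xget (0, 0) [set t | exists b1 b2, base_diff x t.1 t.2 b1 b2] in t.1 - t.2.

Lemma base_massE x t1 t2 b1 b2 : base_diff x t1 t2 b1 b2 -> base_mass x = t1 - t2.
Proof.
move=> [t10 t20 B1 B2 ->]; rewrite /base_mass.
case: xgetP => [[s1 s2] _ /= [c1 [c2 [s10 s20 C1 C2 E]]]|/(_ (t1, t2)) []]; last first.
  by exists b1, b2.
have : t1 *: b1 + s2 *: c2 = s1 *: c1 + t2 *: b2.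
  by rewrite -[t1 *: b1](subrK (t2 *: b2)) E addrAC subrK.
by move/base_coef_sum_eq => /(_ t10 s20 s10 t20 B1 C2 C1 B2); lra.
Qed.

Lemma base_diffsZ a x :
  base_diffs x -> base_diffs (a *: x) /\ base_mass (a *: x) = a * base_mass x.
Proof.
move=> [t1 [t2 [b1 [b2 hx]]]]; rewrite (base_massE hx); case: hx => t10 t20 B1 B2 ->.
have [a0|a_lt0] := lerP 0 a.
  have h : base_diff (a *: (t1 *: b1 - t2 *: b2)) (a * t1) (a * t2) b1 b2.
    by split; rewrite ?mulr_ge0 // scalerBr !scalerA.
  by split; [exists (a * t1), (a * t2), b1, b2 | rewrite (base_massE h) mulrBr].
have h : base_diff (a *: (t1 *: b1 - t2 *: b2)) (- a * t2) (- a * t1) b2 b1.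
  have Na0 : 0 <= - a by rewrite oppr_ge0 ltW.
  split; rewrite ?mulr_ge0 //.
  by rewrite scalerBr !scalerA !mulNr !scaleNr opprK addrC.
by split; [exists (- a * t2), (- a * t1), b2, b1 | rewrite (base_massE h); ring].
Qed.

Lemma base_diffsD x y : base_diffs x -> base_diffs y ->
  base_diffs (x + y) /\ base_mass (x + y) = base_mass x + base_mass y.
Proof.
move=> [t1 [t2 [b1 [b2 hx]]]] [s1 [s2 [c1 [c2 hy]]]].
rewrite (base_massE hx) (base_massE hy).
case: hx hy => t10 t20 B1 B2 -> [s10 s20 C1 C2 ->].
have [d1 D1 Ed1] := base_conic_comb t10 s10 B1 C1.
have [d2 D2 Ed2] := base_conic_comb t20 s20 B2 C2.
have h : base_diff (t1 *: b1 - t2 *: b2 + (s1 *: c1 - s2 *: c2))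
    (t1 + s1) (t2 + s2) d1 d2.
  by split; rewrite ?addr_ge0 // -Ed1 -Ed2 addrACA -opprD.
by split; [exists (t1 + s1), (t2 + s2), d1, d2 | rewrite (base_massE h); ring].
Qed.

Lemma base_diff_base b : B b -> base_diff b 1 0 b b.
Proof. by move=> Bb; split; rewrite // scale1r scale0r subr0. Qed.

Lemma subspace_base_diffs : is_subspace base_diffs.
Proof.
split; last by move=> a x y Sx Sy; exact: (base_diffsD (base_diffsZ a Sx).1 Sy).1.
have [_ _ [b [Bb _]]] := base_sec V.
by exists 0, 0, b, b; split; rewrite // !scale0r subrr.
Qed.

Lemma linear_on_base_mass : linear_on base_diffs base_mass.
Proof.
move=> a x y Sx Sy.
by rewrite (base_diffsD (base_diffsZ a Sx).1 Sy).2 (base_diffsZ a Sx).2.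
Qed.

Lemma base_mass_nonneg : nonneg_on C base_diffs base_mass.
Proof.
move=> x [t1 [t2 [b1 [b2 hx]]]] Cx; rewrite (base_massE hx).
case: hx => t10 t20 B1 B2 Ex.
have [x0|xnz] := eqVneq x 0.
  suff -> : t1 = t2 by rewrite subrr.
  by apply: base_scale_eq B1 B2 _ => //; apply/eqP; rewrite -subr_eq0 -Ex x0.
have [_ [_ _ _ uniq_rep] _] := base_sec V.
have Kx : (C `&` span_of B) x by split; rewrite // Ex; exact: span_of_base_diff.
have [s [b [s0 Bb Exs _]]] := uniq_rep x Kx xnz.
have : s *: b + t2 *: b2 = t1 *: b1 + 0 *: b1 by rewrite -Exs Ex subrK scale0r addr0.
by move/base_coef_sum_eq => /(_ (ltW s0) t20 t10 (lexx 0) Bb B2 B1 B1); lra.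
Qed.

Lemma dual_base_nonempty : exists phi, dual_base (V := V) phi.
Proof.
have [[_ C_scale C_add _] _ _ _] := pos_proper V.
have [_ _ [e [Be Ce]]] := base_sec V.
have e_unit := interior_order_unit C_scale Ce.
have [|phi [phi_pos phi_mass]] :=
  riesz_extension C_add C_scale e_unit (S := base_diffs) (f := base_mass).
  split; [exact: subspace_base_diffs | exact: linear_on_base_mass | exact: base_mass_nonneg |].
  by exists 1, 0, e, e; exact: base_diff_base.
exists phi; split => // b Bb.
rewrite phi_mass; last by exists 1, 0, b, b; exact: base_diff_base.
by rewrite (base_massE (base_diff_base Bb)) subr0.
Qed.
End BaseSection.


Section BaseNorm.
Variable R : realType.
Implicit Types V W : BSObj R.

Lemma pairingE n (phi x : 'rV[R]_n) : pairing phi x = (x *m phi^T) 0 0.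
Proof. by rewrite /pairing mxE; apply: eq_bigr => j _; rewrite mxE mulrC. Qed.

Lemma pairing_mulmx m n (psi : 'rV[R]_n) (x : 'rV[R]_m) (A : 'M[R]_(m, n)) :
  pairing psi (x *m A) = pairing (psi *m A^T) x.
Proof. by rewrite !pairingE trmx_mul trmxK mulmxA. Qed.

Lemma pairingDr n (psi x y : 'rV[R]_n) :
  pairing psi (x + y) = pairing psi x + pairing psi y.
Proof. by rewrite !pairingE mulmxDl mxE. Qed.

Lemma pairing0l n (x : 'rV[R]_n) : pairing 0 x = 0.
Proof. by rewrite pairingE trmx0 mulmx0 mxE. Qed.

Lemma pairing0r n (psi : 'rV[R]_n) : pairing psi 0 = 0.
Proof. by rewrite pairingE mul0mx mxE. Qed.

Lemma dual_cone_mulmx V W (A : 'M[R]_(bsdim V, bsdim W)) psi :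
  BSmor A -> dual_cone psi -> dual_cone (psi *m A^T).
Proof. by move=> [A_pos _] psi_pos c Cc; rewrite -pairing_mulmx; apply/psi_pos/A_pos. Qed.

Lemma dual_interval_mulmx V W (A : 'M[R]_(bsdim V, bsdim W)) psi :
  BSmor A -> dual_interval psi -> dual_interval (psi *m A^T).
Proof.
move=> hA [b [[b_pos b_mass] lo hi]]; exists (b *m A^T); split.
- split=> [|b' Bb']; first exact: dual_cone_mulmx.
  by rewrite -pairing_mulmx; apply/b_mass/hA.2.
- by rewrite -mulmxDl; exact: dual_cone_mulmx.
- by rewrite -mulmxBl; exact: dual_cone_mulmx.
Qed.

Lemma dual_interval0 V : dual_interval (V := V) 0.
Proof.
have [phi [phi_pos phi_mass]] := dual_base_nonempty V.
by exists phi; rewrite add0r subr0.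
Qed.

Lemma bnorm_ge0 V x : (0 <= bnorm (V := V) x)%E.
Proof. by apply: ereal_sup_ubound; exists 0; [exact: dual_interval0 | rewrite pairing0l]. Qed.

Lemma bnorm0 V : bnorm (V := V) 0 = 0%E.
Proof.
apply/eqP; rewrite eq_le bnorm_ge0 andbT.
by apply: ge_ereal_sup => _ [psi _ <-]; rewrite pairing0r.
Qed.

Lemma lee_bnormD V x y : (bnorm (V := V) (x + y) <= bnorm x + bnorm y)%E.
Proof.
apply: ge_ereal_sup => _ [psi psi_int <-]; rewrite pairingDr EFinD.
by apply: leeD; apply: ereal_sup_ubound; exists psi.
Qed.

Lemma bnorm_mulmx_le V W (A : 'M[R]_(bsdim V, bsdim W)) x :
  BSmor A -> (bnorm (x *m A) <= bnorm x)%E.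
Proof.
move=> hA; apply: ge_ereal_sup => _ [psi psi_int <-]; rewrite pairing_mulmx.
by apply: ereal_sup_ubound; exists (psi *m A^T) => //; exact: dual_interval_mulmx.
Qed.

End BaseNorm.

Lemma le_adde_ereal_inf (R : realFieldType) (x a : \bar R) (S : set \bar R) :
  (0 <= a)%E -> (forall s, S s -> 0 <= s)%E -> (forall s, S s -> x <= a + s)%E ->
  (x <= a + ereal_inf S)%E.
Proof.
move=> a0 S0 le_xS.
have inf0 : (0 <= ereal_inf S)%E by apply: le_ereal_inf_tmp => s Ss; exact: S0.
case: a a0 le_xS => [r| |] // a0 le_xS.
  by rewrite -leeBlDl //; apply: le_ereal_inf_tmp => s Ss; rewrite leeBlDl //; exact: le_xS.
by rewrite addye ?leey // gt_eqF // (lt_le_trans _ inf0) // ltNy0.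
Qed.

Section Delta.
Variables (R : realType) (Fob : BSObj R -> Prop)
  (Fmor : forall V W : BSObj R, 'M[R]_(bsdim V, bsdim W) -> Prop).
Arguments Fmor : clear implicits.
Hypothesis F_subcat : is_subcat Fob Fmor.
Implicit Types V W : BSObj R.

Lemma deltaF_ge0 V1 V2 (b1 : 'rV[R]_(bsdim V1)) (b2 : 'rV[R]_(bsdim V2)) :
  (0 <= deltaF Fmor b1 b2)%E.
Proof. by apply: le_ereal_inf_tmp => _ [A _ <-]; exact: bnorm_ge0. Qed.

Lemma deltaF_le_bnorm V1 V2 (b1 : 'rV[R]_(bsdim V1)) (b2 : 'rV[R]_(bsdim V2)) A :
  Fmor V1 V2 A -> (deltaF Fmor b1 b2 <= bnorm (b1 *m A - b2))%E.
Proof. by move=> FA; apply: ereal_inf_lbound; exists A. Qed.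

Lemma deltaFxx V (b : 'rV[R]_(bsdim V)) : Fob V -> deltaF Fmor b b = 0%E.
Proof.
move=> FV; apply/eqP; rewrite eq_le deltaF_ge0 andbT.
have [_ F_id _] := F_subcat.
by have := deltaF_le_bnorm b b (F_id V FV); rewrite mulmx1 subrr bnorm0.
Qed.

Lemma deltaF_triangle V1 V2 V3 (b1 : 'rV[R]_(bsdim V1)) (b2 : 'rV[R]_(bsdim V2))
    (b3 : 'rV[R]_(bsdim V3)) :
  (deltaF Fmor b1 b3 <= deltaF Fmor b1 b2 + deltaF Fmor b2 b3)%E.
Proof.
have [F_mor _ F_comp] := F_subcat.
rewrite addeC; apply: le_adde_ereal_inf; first exact: deltaF_ge0.
  by move=> _ [A _ <-]; exact: bnorm_ge0.
move=> _ [A FA <-]; rewrite addeC; apply: le_adde_ereal_inf; first exact: bnorm_ge0.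
  by move=> _ [B _ <-]; exact: bnorm_ge0.
move=> _ [B FB <-].
apply: le_trans (deltaF_le_bnorm b1 b3 (F_comp _ _ _ _ _ FA FB)) _.
have -> : b1 *m (A *m B) - b3 = (b1 *m A - b2) *m B + (b2 *m B - b3).
  by rewrite mulmxA mulmxBl addrA subrK.
apply: le_trans (lee_bnormD _ _) _; apply: leeD => //.
by apply: bnorm_mulmx_le; have [] := F_mor _ _ _ FB.
Qed.

Lemma DeltaF_ge0 V1 V2 (b1 : 'rV[R]_(bsdim V1)) (b2 : 'rV[R]_(bsdim V2)) :
  (0 <= DeltaF Fmor b1 b2)%E.
Proof. by rewrite le_max deltaF_ge0. Qed.

Lemma DeltaFxx V (b : 'rV[R]_(bsdim V)) : Fob V -> DeltaF Fmor b b = 0%E.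
Proof. by move=> FV; rewrite /DeltaF deltaFxx // maxxx. Qed.

Lemma DeltaFC V1 V2 (b1 : 'rV[R]_(bsdim V1)) (b2 : 'rV[R]_(bsdim V2)) :
  DeltaF Fmor b1 b2 = DeltaF Fmor b2 b1.
Proof. exact: maxC. Qed.

Lemma DeltaF_triangle V1 V2 V3 (b1 : 'rV[R]_(bsdim V1)) (b2 : 'rV[R]_(bsdim V2))
    (b3 : 'rV[R]_(bsdim V3)) :
  (DeltaF Fmor b1 b3 <= DeltaF Fmor b1 b2 + DeltaF Fmor b2 b3)%E.
Proof.
rewrite ge_max; apply/andP; split.
  apply: le_trans (deltaF_triangle b1 b2 b3) _.
  by apply: leeD; rewrite le_max lexx ?orbT.
apply: le_trans (deltaF_triangle b3 b2 b1) _.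
by rewrite addeC; apply: leeD; rewrite le_max lexx ?orbT.
Qed.

End Delta.

Theorem proposition2 (R : realType) (Fob : BSObj R -> Prop)
    (Fmor : forall V W : BSObj R, 'M[R]_(bsdim V, bsdim W) -> Prop) :
  is_subcat Fob Fmor -> convex_homs Fob Fmor ->
  [/\ (forall (V1 V2 : BSObj R) (b1 : 'rV[R]_(bsdim V1)) (b2 : 'rV[R]_(bsdim V2)),
         Fob V1 -> Fob V2 -> base V1 b1 -> base V2 b2 ->
         (0 <= DeltaF Fmor b1 b2)%E),
      (forall (V : BSObj R) (b : 'rV[R]_(bsdim V)),
         Fob V -> base V b -> DeltaF Fmor b b = 0%E),
      (forall (V1 V2 : BSObj R) (b1 : 'rV[R]_(bsdim V1)) (b2 : 'rV[R]_(bsdim V2)),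
         Fob V1 -> Fob V2 -> base V1 b1 -> base V2 b2 ->
         DeltaF Fmor b1 b2 = DeltaF Fmor b2 b1)
    & (forall (V1 V2 V3 : BSObj R) (b1 : 'rV[R]_(bsdim V1)) (b2 : 'rV[R]_(bsdim V2))
          (b3 : 'rV[R]_(bsdim V3)),
         Fob V1 -> Fob V2 -> Fob V3 -> base V1 b1 -> base V2 b2 -> base V3 b3 ->
         (DeltaF Fmor b1 b3 <= DeltaF Fmor b1 b2 + DeltaF Fmor b2 b3)%E)].
Proof.
move=> F_subcat _; split.
- by move=> V1 V2 b1 b2 _ _ _ _; exact: DeltaF_ge0.
- by move=> V b FV _; exact: (DeltaFxx F_subcat).
- by move=> V1 V2 b1 b2 _ _ _ _; exact: DeltaFC.
- by move=> V1 V2 V3 b1 b2 b3 _ _ _ _ _ _; exact: (DeltaF_triangle F_subcat).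
Qed.
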